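(* Suppose that for every $J\subseteq S$ we are given a function $\mathrm{Irr}(W_J)\to\Gamma$, $E\mapsto a_E$, such that for every $J\subseteq S$ (regarding $(W_J,J)$ as a Coxeter group with the restricted weight function) the following hold: (A0) $a_{1_{W_J}}=0$ when $W_J=\{1\}$ (i.e. $J=\varnothing$); (A1) if $K\subsetneqq J$, $M\in\mathrm{Irr}(W_K)$, $E\in\mathrm{Irr}(W_J)$ and $E$ is a constituent of $\mathrm{Ind}_{W_K}^{W_J}M$, then $a_M\le a_E$; (A2) if $K\subsetneqq J$ and $M\in\mathrm{Irr}(W_K)$, then there is $E\in\mathrm{Irr}(W_J)$ which is a constituent of $\mathrm{Ind}_{W_K}^{W_J}M$ with $a_M=a_E$; (A3) for every $E\in\mathrm{Irr}(W_J)$ there exist $K\subsetneqq J$ and $M\in\mathrm{Irr}(W_K)$ such that either $E$ is a constituent of $\mathrm{Ind}_{W_K}^{W_J}M$ and $a_M=a_E$, or $E\otimes\mathrm{sgn}$ is a constituent of $\mathrm{Ind}_{W_K}^{W_J}M$ and $a_M=a_{E\otimes\mathrm{sgn}}$; (A4) for every $E\in\mathrm{Irr}(W_J)$, $a_{E\otimes\mathrm{sgn}}-a_E=\omega_L(E)$ (computed in $W_J$). Then $a_E=\tilde a_E$ for all $J\subseteq S$ and all $E\in\mathrm{Irr}(W_J)$; in particular for all $E\in\mathrm{Irr}(W)$.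
   Context: $(W,S)$ is a finite Coxeter group with length function $l$. $\Gamma$ is an abelian group with a total order $\le$ compatible with addition. $L\colon W\to\Gamma$ is a weight function: $L(ww')=L(w)+L(w')$ whenever $l(ww')=l(w)+l(w')$; assume $L(s)\ge 0$ for all $s\in S$. For $J\subseteq S$, $W_J$ is the parabolic subgroup generated by $J$ (a Coxeter group with generators $J$), and $L$ restricts to a weight function on it. $\mathrm{Irr}(W)$ is the set of complex irreducible representations of $W$; $\mathrm{sgn}$ is the sign representation; $1_W$ the trivial one. For a Coxeter group $(W,S)$: let $S'\subseteq S$ be a set of representatives of the conjugacy classes of $W$ contained in $T=\{wsw^{-1}\}$, and $N_s$ the size of the class of $s$; set $\omega_L(E):=\sum_{s\in S'}\frac{N_s\,\mathrm{trace}(s,E)}{\dim E}L(s)\in\Gamma$. For $M\in\mathrm{Irr}(W_J)$, write $M\uparrow E$ if $E$ is a constituent of $\mathrm{Ind}_{W_J}^W M$. Definition of $\tilde a$ (recursively over parabolic subgroups): if $W=\{1\}$, $\tilde a_{1_W}:=0$. Otherwise, assuming $\tilde a$ defined for all $W_J$, $J\subsetneqq S$, set $\tilde a'_E:=\max\{\tilde a_M\mid M\in\mathrm{Irr}(W_J),\ J\subsetneqq S,\ M\uparrow E\}$, and $\tilde a_E:=\tilde a'_E$ if $\tilde a'_{E\otimes\mathrm{sgn}}-\tilde a'_E\le\omega_L(E)$, and $\tilde a_E:=\tilde a'_{E\otimes\mathrm{sgn}}-\omega_L(E)$ otherwise. The same recursion defines $\tilde a$ on $\mathrm{Irr}(W_J)$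 for every $J\subseteq S$. *)

From HB Require Import structures.
From mathcomp Require Import all_boot all_order all_algebra all_fingroup all_solvable all_field all_character.
Set Implicit Arguments. Unset Strict Implicit. Unset Printing Implicit Defensive.
Import Order.TTheory GRing.Theory Num.Theory.

Section Coxeter.
Variable gT : finGroupType.
Local Open Scope group_scope.

Definition cox_words (S : {set gT}) (n : nat) : {set gT} :=
  iter n (fun X : {set gT} => X * S) [set 1].

(* length function l_S : the least n such that w is a product of n
   elements of S (for w in <<S>>, this n is < #|gT|.+1). *)
Definition cox_len (S : {set gT}) (w : gT) : nat :=
  find (fun n => w \in cox_words S n) (iota 0 #|gT|.+1).

(* (W,S) is a Coxeter system: S is a set of involutions generating W, and
   W has the Coxeter presentation < S | (st)^{m(s,t)} = 1 >, with
   m(s,t) the order of st in W, expressed by the universal property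
   of the presentation (tested against finite groups). *)
Definition coxeter_system (W : {group gT}) (S : {set gT}) : Prop :=
  [/\ S \subset W, <<S>> = W,
      {in S, forall s, s != 1 /\ s ^+ 2 = 1} &
      forall (hT : finGroupType) (f : gT -> hT),
        {in S &, forall s t, (f s * f t) ^+ #[s * t] = 1} ->
        exists phi : {morphism W >-> hT}, {in S, forall s, phi s = f s}].
End Coxeter.

Section Gamma.
Variable Γ : zmodType.
Variable le : rel Γ.
Local Open Scope ring_scope.

Definition ordered_abgroup : Prop :=
  [/\ reflexive le, antisymmetric le, transitive le, total le &
      forall x y z, le x y -> le (x + z) (y + z)].

Definition gmax (x y : Γ) : Γ := if le x y then y else x.

Variable gT : finGroupType.

Definition weight_function (W : {group gT}) (S : {set gT}) (L : gT -> Γ) : Prop :=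
  {in W &, forall w w', cox_len S (w * w')%g = (cox_len S w + cox_len S w')%N ->
                         L (w * w')%g = L w + L w'}.

(* omega_L(E) for the group G = W_J with simple reflections J:
   sum over the conjugacy classes C of G meeting J (one representative
   s_C in C ∩ J each) of  (N_s trace(s,E)/dim E) L(s).  The coefficient
   N_s chi(s)/chi(1) is an integer, so it is taken through floor. *)
Definition omegaL (L : gT -> Γ) (G : {group gT}) (J : {set gT}) (i : Iirr G) : Γ :=
  \sum_(C in classes G | C :&: J != set0)
     L (repr (C :&: J)) *~
       Num.floor ((#|C|%:R * 'chi_i (repr (C :&: J))) / 'chi_i 1%g).

(* index of E ⊗ sgn, where sgn(g) = (-1)^(l_J(g)) on G = W_J *)
Definition sgn_twist (G : {group gT}) (J : {set gT}) (i : Iirr G) : Iirr G :=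
  odflt i [pick j : Iirr G |
     [forall g in G, 'chi_j g == 'chi_i g * (-1) ^+ cox_len J g]].

Variable L : gT -> Γ.

(* the recursive definition of tilde a, with fuel n (n >= #|J| suffices) *)
Fixpoint atilde_fuel (n : nat) (J : {set gT}) : Iirr <<J>>%G -> Γ :=
  match n with
  | 0 => fun _ => 0
  | n'.+1 => fun i =>
    if J == set0 then 0 else
    let a' := fun i' : Iirr <<J>>%G =>
      \big[gmax/0]_(K : {set gT} | K \proper J)
        \big[gmax/0]_(k : Iirr <<K>>%G | i' \in irr_constt ('Ind[<<J>>%G] 'chi_k))
          @atilde_fuel n' K k in
    let w := @omegaL L <<J>>%G J i in
    let ts := @sgn_twist <<J>>%G J i in
    if le (a' ts - a' i) w then a' i else a' ts - w
  end.

Definition atilde (J : {set gT}) (i : Iirr <<J>>%G) : Γ := @atilde_fuel #|J| J i.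
End Gamma.
Arguments atilde [Γ] le [gT] L J i.

From HB Require Import structures.
From mathcomp Require Import all_boot all_order all_algebra all_fingroup all_solvable all_field all_character.
Import Order.TTheory GRing.Theory Num.Theory.
Local Open Scope ring_scope.

(* For J nonempty write a'_E for the maximum of a_M over the
   M (M in Irr W_K, K proper in J) inducing to E.  By (A1) a'_E <= a_E, and by
   (A3) equality holds for E or for E (x) sgn; together with (A4) this forces
   a_E to be the value produced by the defining rule of tilde a from a', and
   a' agrees with tilde a' by induction.  (A0) and (A1) give a >= 0, which is
   needed because the maxima are taken with default value 0.  Neither the
   Coxeter structure, nor the weights, nor (A2) play any role. *)

Set Implicit Arguments. Unset Strict Implicit.

Lemma Iirr_gen0 (gT : finGroupType) (i : Iirr <<(set0 : {set gT})>>%G) : i = 0.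
Proof.
have Nirr1 : Nirr <<(set0 : {set gT})>>%G = 1%N.
  have := card_classes_abelian <<(set0 : {set gT})>>%G.
  by rewrite NirrE /= gen0 abelian1 cards1 => /esym/eqP.
apply: val_inj => /=; have := ltn_ord i; move: (nat_of_ord i) => m.
by rewrite Nirr1; case: m.
Qed.

Section OrderedGroup.
Variables (Γ : zmodType) (le : rel Γ).
Hypothesis ogle : ordered_abgroup le.

Lemma ogle_refl x : le x x.
Proof. by case: ogle => r _ _ _ _; apply: r. Qed.

Lemma ogle_trans y x z : le x y -> le y z -> le x z.
Proof. by case: ogle => _ _ t _ _; apply: t. Qed.

Lemma ogle_anti x y : le x y -> le y x -> x = y.
Proof. by case: ogle => _ a _ _ _ h1 h2; apply: a; rewrite h1 h2. Qed.

Lemma ogle_total x y : le x y || le y x.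
Proof. by case: ogle => _ _ _ t _; apply: t. Qed.

Lemma ogleD2r z x y : le x y -> le (x + z) (y + z).
Proof. by case: ogle => _ _ _ _ a; apply: a. Qed.

Lemma ogle_gmaxl x y : le x (gmax le x y).
Proof. by rewrite /gmax; case: ifP => // _; apply: ogle_refl. Qed.

Lemma ogle_gmaxr x y : le y (gmax le x y).
Proof.
rewrite /gmax; case: ifP => [_|nxy]; first exact: ogle_refl.
by have := ogle_total x y; rewrite nxy.
Qed.

Lemma ogle_bigmax_sup (I : eqType) (r : seq I) (P : pred I) (F : I -> Γ) j :
  j \in r -> P j -> le (F j) (\big[gmax le/0]_(i <- r | P i) F i).
Proof.
elim: r => // x r IHr; rewrite inE big_cons => /orP[/eqP-> | jr] Pj.
  by rewrite Pj; apply: ogle_gmaxl.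
case: ifP => _; last exact: IHr.
exact: ogle_trans (IHr jr Pj) (ogle_gmaxr _ _).
Qed.

Lemma ogle_bigmax_ub (I : Type) (r : seq I) (P : pred I) (F : I -> Γ) x :
  le 0 x -> (forall i, P i -> le (F i) x) ->
  le (\big[gmax le/0]_(i <- r | P i) F i) x.
Proof.
move=> x_ge0 F_le; apply: (big_ind (fun v => le v x)) => // u v.
by rewrite /gmax; case: ifP.
Qed.

(* The rule defining tilde a from tilde a': [x'] and [y'] are the values of a'
   at E and at E (x) sgn, and [w] is omega_L(E). *)
Definition tilde_rule (x' y' w : Γ) : Γ := if le (y' - x') w then x' else y' - w.

Lemma tilde_rule_eq x y x' y' :
  le x' x -> le y' y -> x' = x \/ y' = y -> tilde_rule x' y' (y - x) = x.
Proof.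
rewrite /tilde_rule => le_x le_y [->|->].
  by rewrite (ogleD2r (- x) le_y).
case: ifP => [le_yx|_]; last by rewrite opprB addrC subrK.
apply: ogle_anti le_x _.
have := ogleD2r (x + x' - y) le_yx.
by rewrite addrC addrA subrK addrK [y - x + _]addrC addrA subrK [x + _]addrC addrK.
Qed.

End OrderedGroup.

Section InducedMax.
Variables (Γ : zmodType) (le : rel Γ) (gT : finGroupType).
Hypothesis ogle : ordered_abgroup le.

Definition ind_max (F : forall K : {set gT}, Iirr <<K>>%G -> Γ)
    (J : {set gT}) (i : Iirr <<J>>%G) : Γ :=
  \big[gmax le/0]_(K : {set gT} | K \proper J)
    \big[gmax le/0]_(k : Iirr <<K>>%G | i \in irr_constt ('Ind[<<J>>%G] 'chi_k))
      F K k.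

Lemma atilde_fuelS (L : gT -> Γ) n (J : {set gT}) (i : Iirr <<J>>%G) :
  atilde_fuel le L n.+1 i =
    if J == set0 then 0 else
    tilde_rule le (ind_max (atilde_fuel le L n) i)
      (ind_max (atilde_fuel le L n) (sgn_twist J i)) (omegaL L J i).
Proof. by []. Qed.

Lemma eq_ind_max F G (J : {set gT}) (i : Iirr <<J>>%G) :
  (forall K (k : Iirr <<K>>%G), K \proper J -> F K k = G K k) ->
  ind_max F i = ind_max G i.
Proof.
by move=> eqFG; apply: eq_bigr => K pKJ; apply: eq_bigr => k _; apply: eqFG.
Qed.

Lemma ind_max_sup F (J K : {set gT}) (i : Iirr <<J>>%G) (k : Iirr <<K>>%G) :
  K \proper J -> i \in irr_constt ('Ind[<<J>>%G] 'chi_k) -> le (F K k) (ind_max F i).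
Proof.
move=> pKJ ik; apply: (ogle_trans ogle (y := \big[gmax le/0]_(k' : Iirr <<K>>%G |
    i \in irr_constt ('Ind[<<J>>%G] 'chi_k')) F K k')).
  exact: (ogle_bigmax_sup ogle (fun k => F K k) (mem_index_enum k)).
exact: (ogle_bigmax_sup ogle (fun K' => \big[gmax le/0]_(k' : Iirr <<K'>>%G |
    i \in irr_constt ('Ind[<<J>>%G] 'chi_k')) F K' k') (mem_index_enum K)).
Qed.

Lemma ind_max_ub F x (J : {set gT}) (i : Iirr <<J>>%G) :
  le 0 x ->
  (forall K (k : Iirr <<K>>%G), K \proper J ->
     i \in irr_constt ('Ind[<<J>>%G] 'chi_k) -> le (F K k) x) ->
  le (ind_max F i) x.
Proof.
move=> x_ge0 F_le; apply: ogle_bigmax_ub => // K pKJ.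
by apply: ogle_bigmax_ub => // k; apply: F_le.
Qed.

End InducedMax.

Section ParabolicValues.
Variables (Γ : zmodType) (le : rel Γ) (gT : finGroupType) (S : {set gT}).
Variable a : forall J : {set gT}, Iirr <<J>>%G -> Γ.
Arguments a : clear implicits.
Hypothesis ogle : ordered_abgroup le.
Hypothesis a_gen0 : forall i : Iirr <<set0>>%G, 'chi_i = 1 -> a set0 i = 0.
Hypothesis a_Ind_mono : forall (J K : {set gT}) (k : Iirr <<K>>%G) (i : Iirr <<J>>%G),
  J \subset S -> K \proper J ->
  i \in irr_constt ('Ind[<<J>>%G] 'chi_k) -> le (a K k) (a J i).

Lemma a_set0 (i : Iirr <<set0>>%G) : a set0 i = 0.
Proof. by apply: a_gen0; rewrite (Iirr_gen0 i) irr0. Qed.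

(* Every E is a constituent of the module induced from the trivial subgroup. *)
Lemma a_ge0 (J : {set gT}) (i : Iirr <<J>>%G) : J \subset S -> le 0 (a J i).
Proof.
move=> sJS; have [J0|nJ0] := eqVneq J set0.
  by subst J; rewrite a_set0 ogle_refl.
have [k ik] := constt_cfRes_irr <<(set0 : {set gT})>>%G i.
rewrite -(a_set0 k); apply: a_Ind_mono; rewrite ?proper0 //.
by rewrite constt_Ind_Res.
Qed.

Lemma ind_max_le_a (J : {set gT}) (i : Iirr <<J>>%G) :
  J \subset S -> le (ind_max le a i) (a J i).
Proof.
move=> sJS; apply: ind_max_ub => [|K k]; first exact: a_ge0.
exact: a_Ind_mono.
Qed.

Lemma ind_max_eq_a (J K : {set gT}) (i : Iirr <<J>>%G) (k : Iirr <<K>>%G) :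
  J \subset S -> K \proper J -> i \in irr_constt ('Ind[<<J>>%G] 'chi_k) ->
  a K k = a J i -> ind_max le a i = a J i.
Proof.
move=> sJS pKJ ik eq_a; apply: (ogle_anti ogle); first exact: ind_max_le_a.
by rewrite -eq_a; apply: ind_max_sup.
Qed.

End ParabolicValues.

Theorem mainTheorem5 (gT : finGroupType) (W : {group gT}) (S : {set gT})
  (Γ : zmodType) (le : rel Γ) (L : gT -> Γ)
  (a : forall J : {set gT}, Iirr <<J>>%G -> Γ) :
  coxeter_system W S ->
  ordered_abgroup le ->
  weight_function W S L ->
  {in S, forall s, le 0%R (L s)} ->
  (* (A0) *)
  (forall i : Iirr <<set0>>%G, 'chi_i = 1%R -> a set0 i = 0%R) ->
  (* (A1) *)
  (forall (J K : {set gT}) (k : Iirr <<K>>%G) (i : Iirr <<J>>%G),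
      J \subset S -> K \proper J ->
      i \in irr_constt ('Ind[<<J>>%G] 'chi_k) -> le (a K k) (a J i)) ->
  (* (A2) *)
  (forall (J K : {set gT}) (k : Iirr <<K>>%G),
      J \subset S -> K \proper J ->
      exists i : Iirr <<J>>%G,
        i \in irr_constt ('Ind[<<J>>%G] 'chi_k) /\ a K k = a J i) ->
  (* (A3) *)
  (forall (J : {set gT}) (i : Iirr <<J>>%G), J \subset S -> J != set0 ->
      exists K : {set gT}, K \proper J /\ exists k : Iirr <<K>>%G,
        (i \in irr_constt ('Ind[<<J>>%G] 'chi_k) /\ a K k = a J i) \/
        (sgn_twist J i \in irr_constt ('Ind[<<J>>%G] 'chi_k) /\
           a K k = a J (sgn_twist J i))) ->
  (* (A4) *)
  (forall (J : {set gT}) (i : Iirr <<J>>%G), J \subset S ->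
      (a J (sgn_twist J i) - a J i)%R = omegaL L J i) ->
  forall (J : {set gT}) (i : Iirr <<J>>%G), J \subset S ->
    a J i = atilde le L J i.
Proof.
move=> _ ogle _ _ A0 A1 _ A3 A4.
suff a_fuel n (J : {set gT}) (i : Iirr <<J>>%G) :
    J \subset S -> (#|J| <= n)%N -> a J i = atilde_fuel le L n i.
  by move=> J i sJS; apply: a_fuel.
elim: n J i => [|n IHn] J i sJS.
  by rewrite leqn0 cards_eq0 => /eqP J0; subst J; rewrite (a_set0 A0).
move=> leJn; rewrite atilde_fuelS; case: eqP => [J0|/eqP nJ0].
  by subst J; rewrite (a_set0 A0).
have a'E (j : Iirr <<J>>%G) : ind_max le (atilde_fuel le L n) j = ind_max le a j.
  apply: eq_ind_max => K k pKJ; symmetry; apply: IHn.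
    exact: subset_trans (proper_sub pKJ) sJS.
  by rewrite -ltnS (leq_trans (proper_card pKJ)).
rewrite !a'E -A4 //; symmetry.
have a'_le := ind_max_le_a ogle A0 A1.
apply: (tilde_rule_eq ogle); [exact: a'_le | exact: a'_le |].
have a'_eq := ind_max_eq_a ogle A0 A1 sJS.
have [K [pKJ [k [[ik eq_a] | [tk eq_a]]]]] := A3 J i sJS nJ0.
  by left; apply: a'_eq pKJ ik eq_a.
by right; apply: a'_eq pKJ tk eq_a.
Qed.
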